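(* Let $\mathcal{D}\subset\mathbb{R}^d$ be bounded and convex with non-empty interior. Assume $\mathcal{C}\subset\Gamma\backslash G$ is compact and $\theta>\overline\rho(\mathcal{C},\mathcal{D}\times(0,1])$. Then \[F(M,t)\leq\theta^{d+1}\] for all $M$ with $\Gamma M\in\mathcal{C}D(\theta)^{-1}$ and all $t\in\mathcal{D}$.
   Context: Let $G=\operatorname{SL}(d+1,\mathbb{R})$ and $\Gamma=\operatorname{SL}(d+1,\mathbb{Z})$; vectors are row vectors and $\mathbb{Z}^{d+1}M$ is the lattice spanned by the rows of $M$. For $M\in G$, $t\in\mathcal{D}$: $F(M,t)=\min\{y>0\mid (x,y)\in\mathbb{Z}^{d+1}M,\ x+t\in\mathcal{D}\}$ ($x\in\mathbb{R}^d$, $y\in\mathbb{R}$), and $\infty$ if no minimum exists. For a bounded $\mathcal{A}\subset\mathbb{R}^{d+1}$ with non-empty interior, the covering radius is $\rho(M,\mathcal{A})=\inf\{\theta>0\mid \theta\mathcal{A}+\mathbb{Z}^{d+1}M=\mathbb{R}^{d+1}\}$, and for $\mathcal{C}\subset\Gamma\backslash G$, $\overline\rho(\mathcal{C},\mathcal{A})=\sup_{\Gamma M\in\mathcal{C}}\rho(M,\mathcal{A})$. For $\theta>0$, $D(\theta)=\operatorname{diag}(\theta,\ldots,\theta,\theta^{-d})\in G$ (with $d$ entries $\theta$), and $\mathcal{C}D(\theta)^{-1}=\{\Gamma MD(\theta)^{-1}\mid \Gamma M\in\mathcal{C}\}$. *)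

From HB Require Import structures.
From mathcomp Require Import all_boot all_order all_algebra.
From mathcomp Require Import all_classical all_reals all_analysis.
Set Implicit Arguments. Unset Strict Implicit. Unset Printing Implicit Defensive.
Import Order.TTheory GRing.Theory Num.Theory.
Import numFieldNormedType.Exports.
Local Open Scope classical_set_scope.
Local Open Scope ring_scope.

Section Defs.
Variables (R : realType) (d : nat).

(* Row vectors in R^(d+1) are written (x, y) with x in R^d, y in R. *)
Local Notation V := 'rV[R]_(d + 1).
Local Notation Mat := 'M[R]_(d + 1).

Definition SLR : set Mat := [set M | \det M = 1].

Definition SLZ : set Mat :=
  [set M | exists N : 'M[int]_(d + 1), \det N = 1 /\ M = map_mx intr N].

Definition lattice (M : Mat) : set V :=
  [set v | exists a : 'rV[int]_(d + 1), v = map_mx intr a *m M].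

Definition Fset (D : set 'rV[R]_d) (M : Mat) (t : 'rV[R]_d) : set R :=
  [set y | 0 < y /\ exists v, lattice M v /\ lsubmx v + t \in D /\ rsubmx v = y%:M].

(* F(M,t) = min of Fset, and +oo if no minimum exists *)
Definition F (D : set 'rV[R]_d) (M : Mat) (t : 'rV[R]_d) : \bar R :=
  if `[< exists y, Fset D M t y /\ forall y', Fset D M t y' -> y <= y' >]
  then ereal_inf [set y%:E | y in Fset D M t]
  else +oo%E.

Definition covrad (M : Mat) (A : set V) : \bar R :=
  ereal_inf [set th%:E | th in
    [set th : R | 0 < th /\
       forall z : V, exists a l, A a /\ lattice M l /\ z = th *: a + l]].

(* A subset C of Gamma\G is represented by its (Gamma-saturated) preimage in G.
   rhobar(C, A) = sup over Gamma M in C of rho(M, A) *)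
Definition covrad_sup (C : set Mat) (A : set V) : \bar R :=
  ereal_sup [set covrad M A | M in C].

Definition Dtheta (th : R) : Mat :=
  block_mx (th%:M : 'M[R]_d) 0 0 ((th ^- d)%:M : 'M[R]_1).

Definition cyl (D : set 'rV[R]_d) : set V :=
  [set v | D (lsubmx v) /\ 0 < rsubmx v ord0 ord0 <= 1].

(* C (given as a subset of G) is left Gamma-invariant, i.e. the preimage of a
   subset of Gamma\G *)
Definition Gamma_saturated (C : set Mat) : Prop :=
  C `<=` SLR /\ forall g M, SLZ g -> C M -> C (g *m M).

(* compactness of a subset of Gamma\G in the quotient topology: every cover by
   open subsets of Gamma\G (= Gamma-saturated subsets of G that are open in the
   subspace topology of G) has a finite subcover *)
Definition quotient_compact (C : set Mat) : Prop :=
  forall (I : Type) (U : I -> set Mat),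
    (forall i, open (U i) /\ Gamma_saturated (U i `&` SLR)) ->
    C `<=` \bigcup_i (U i `&` SLR) ->
    exists J : set I, finite_set J /\ C `<=` \bigcup_(i in J) (U i `&` SLR).

End Defs.

From HB Require Import structures.
From mathcomp Require Import all_boot all_order all_algebra.
From mathcomp Require Import all_classical all_reals all_analysis.
From mathcomp Require Import zify.
Import Order.TTheory GRing.Theory Num.Theory.
Import numFieldNormedType.Exports.
Local Open Scope classical_set_scope.
Local Open Scope ring_scope.

(* Let L = Z^(d+1) M.  Since theta exceeds the covering radius of L D(theta),
   some th < theta satisfies th (D x (0,1]) + L D(theta) = R^(d+1).  Covering
   the point (th t, 0) yields (a, eta) in D x (0,1] and v = (x, y) in L with
   v D(theta) = th ((a, eta) - (t, 0)), i.e. x = (th / theta) (a - t) and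
   y = theta^d th eta.  By convexity x + t lies on the segment [t, a] in D, and
   0 < y <= theta^(d+1).  The minimum defining F exists because only finitely
   many points of the discrete lattice L have x + t in the bounded set D and
   0 < y <= y0. *)

Lemma mx_entry_le_norm {R : realType} {m n} (x : 'M[R]_(m, n)) i j :
  `|x i j| <= `|x|.
Proof.
have -> : `|x| = mx_norm x by []; rewrite mx_normrE.
exact: (le_bigmax _ (fun ij : 'I_m * 'I_n => `|x ij.1 ij.2|) (i, j)).
Qed.

Lemma row_mulmx_coord_bound {R : numFieldType} {n} {M : 'M[R]_n}
    {u : 'rV[R]_n} {B : R} :
  M \in unitmx -> (forall i, `|(u *m M) 0 i| <= B) ->
  forall j, `|u 0 j| <= B * \sum_i \sum_k `|invmx M i k|.
Proof.
move=> Mu uB j; have B0 : 0 <= B := le_trans (normr_ge0 _) (uB j).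
rewrite -{1}(mulmxK Mu u) mxE; apply: le_trans (ler_norm_sum _ _ _) _.
rewrite mulr_sumr; apply: ler_sum => i _; rewrite normrM.
apply: le_trans (_ : B * `|invmx M i j| <= _); first by rewrite ler_wpM2r.
by rewrite ler_wpM2l // (bigD1 j) //= lerDl sumr_ge0.
Qed.

Lemma ex_min_of_finite_cover {R : realDomainType} {T : finType} (g : T -> R)
    {S : set R} {y0 : R} :
  S y0 -> (forall y, S y -> y <= y0 -> exists f, g f = y) ->
  exists y, S y /\ forall y', S y' -> y <= y'.
Proof.
move=> Sy0 cover.
pose P := [pred f | `[< S (g f) >] && (g f <= y0)].
have PP f : S (g f) -> g f <= y0 -> P f.
  by move=> Sf fy0; rewrite inE fy0 andbT; apply/asboolP.
have [f0 gf0] := cover y0 Sy0 (lexx _).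
have Pf0 : P f0 by apply: PP; rewrite gf0.
case: (arg_minP g Pf0) => f /[!inE] /andP[/asboolP Sf fy0] f_min.
exists (g f); split => // y' Sy'.
have [y'y0|/ltW y0y'] := leP y' y0; last exact: le_trans fy0 y0y'.
have [f' gf'] := cover y' Sy' y'y0.
by rewrite -gf' in Sy' y'y0 *; apply/f_min/PP.
Qed.

Definition int_box_row {n K : nat} (f : {ffun 'I_n -> 'I_(K + K).+1}) :
  'rV[int]_n :=
  \row_j ((f j : nat)%:Z - K%:Z).

Lemma int_box_rowP n (K : nat) (a : 'rV[int]_n) :
  (forall j, `|a 0 j| <= K%:Z) ->
  exists f : {ffun _ -> 'I_(K + K).+1}, int_box_row f = a.
Proof.
move=> aK; exists [ffun j => inord (absz (a 0 j + K%:Z))].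
by apply/rowP => j; rewrite !mxE ffunE inordK; have := aK j; lia.
Qed.

Lemma convex_shift_mem {R : numDomainType} {E : lmodType R}
    {D : set (convex_lmodType E)} {a t : E} {l : R} :
  convex_set D -> a \in D -> t \in D -> 0 <= l -> l <= 1 ->
  l *: (a - t) + t \in D.
Proof.
move=> cD aD tD l0 l1; have := cD _ _ (Itv01 l0 l1) aD tD.
congr (_ \in D); rewrite /conv /= /unstable.onem scalerBl scale1r scalerBr.
by rewrite addrA addrAC.
Qed.

Lemma latticeN {R : realType} {d} {M : 'M[R]_(d + 1)} {v} :
  lattice M v -> lattice M (- v).
Proof. by case=> a ->; exists (- a); rewrite map_mxN mulNmx. Qed.

Lemma lattice_mulmx {R : realType} {d} {M N : 'M[R]_(d + 1)} {l} :
  lattice (M *m N) l -> exists2 w, lattice M w & l = w *m N.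
Proof.
by case=> a ->; exists (map_mx intr a *m M); [exists a | rewrite mulmxA].
Qed.

Lemma lattice_box_enum {R : realType} {d} {M : 'M[R]_(d + 1)} (B : R) :
  M \in unitmx -> exists K : nat, forall v, lattice M v ->
    (forall i, `|v 0 i| <= B) ->
  exists f : {ffun 'I_(d + 1) -> 'I_(K + K).+1},
    v = map_mx intr (int_box_row f) *m M.
Proof.
move=> Mu; set S := \sum_i \sum_k `|invmx M i k|.
have BS_lt := archi_boundP (normr_ge0 (B * S)).
set K := Num.Def.archi_bound `|B * S|.
exists K => _ [a ->] vB.
have [f <-] : exists f : {ffun _ -> 'I_(K + K).+1}, int_box_row f = a;
  last by exists f.
apply: int_box_rowP => j; rewrite -(ler_int R) intr_norm.
apply: le_trans (_ : _ <= B * S) _.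
  by have := row_mulmx_coord_bound Mu vB j; rewrite mxE.
exact/ltW/(le_lt_trans (ler_norm _) BS_lt).
Qed.

Lemma mul_Dtheta {R : realType} {d} (th : R) (v : 'rV[R]_(d + 1)) :
  v *m Dtheta d th = row_mx (th *: lsubmx v) (th ^- d *: rsubmx v).
Proof.
rewrite -[v in LHS]hsubmxK /Dtheta mul_row_block !mulmx0 addr0 add0r.
by rewrite !mul_mx_scalar.
Qed.

Lemma covrad_lt_cover {R : realType} {d} {M : 'M[R]_(d + 1)} {A} {theta : R} :
  (covrad M A < theta%:E)%E -> exists2 th, 0 < th < theta &
    forall z, exists a l, A a /\ lattice M l /\ z = th *: a + l.
Proof.
case/ereal_inf_lt=> _ [th [th_gt0 cover] <-]; rewrite lte_fin => th_lt.
by exists th; rewrite ?th_gt0.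
Qed.

Lemma Fset_entry_bound {R : realType} {d} {D : set 'rV[R]_d} (t : 'rV[R]_d)
    (y0 : R) :
  bounded_set D -> exists B, forall (v : 'rV[R]_(d + 1)) y,
    lsubmx v + t \in D -> rsubmx v = y%:M -> 0 < y -> y <= y0 ->
    forall i, `|v 0 i| <= B.
Proof.
move=> /pinfty_ex_gt0[r r_gt0 Dr].
exists (r + `|t| + y0) => v y vD vy y_gt0 yy0 i.
have t_y0 : `|t| <= `|t| + y0 by rewrite lerDl ltW ?(lt_le_trans y_gt0).
rewrite -[v]hsubmxK; case: (fintype.split i) (splitK i) => [j|k] <- /=.
  rewrite row_mxEl.
  have -> : lsubmx v 0 j = (lsubmx v + t) 0 j - t 0 j.
    by rewrite [in RHS]mxE addrK.
  rewrite -addrA; apply: le_trans (ler_normB _ _) (lerD _ _).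
    by apply: le_trans (mx_entry_le_norm _ _ _) _; apply: Dr; rewrite -in_setE.
  exact: le_trans (mx_entry_le_norm _ _ _) t_y0.
rewrite row_mxEr vy (ord1 k) mxE eqxx mulr1n gtr0_norm //.
by apply: le_trans yy0 _; rewrite lerDr addr_ge0 // ltW.
Qed.

Lemma Fset_has_min {R : realType} {d} {D : set 'rV[R]_d} {M : 'M[R]_(d + 1)}
    {t : 'rV[R]_d} {y0 : R} :
  bounded_set D -> M \in unitmx -> Fset D M t y0 ->
  exists y, Fset D M t y /\ forall y', Fset D M t y' -> y <= y'.
Proof.
move=> bD Mu Fy0.
have [B vB] := Fset_entry_bound t y0 bD.
have [K enumK] := lattice_box_enum B Mu.
pose g f := (map_mx intr (@int_box_row _ K f) *m M) 0 (rshift d ord0).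
apply: (ex_min_of_finite_cover g Fy0) => y [y_gt0 [v [Lv [vD vy]]]] yy0.
have [f vf] := enumK v Lv (vB v y vD vy y_gt0 yy0).
exists f; have := congr1 (fun m : 'M[R]_1 => m ord0 ord0) vy.
by rewrite /g -vf !mxE eqxx mulr1n.
Qed.

Lemma F_le_Fset {R : realType} {d} {D : set 'rV[R]_d} {M : 'M[R]_(d + 1)}
    {t : 'rV[R]_d} {y : R} :
  bounded_set D -> M \in unitmx -> Fset D M t y -> (F D M t <= y%:E)%E.
Proof.
move=> bD Mu Fy; rewrite /F; case: asboolP => [_|]; last first.
  by move=> /(_ (Fset_has_min bD Mu Fy)).
by apply: ereal_inf_lbound; exists y.
Qed.

Lemma exists_Fset_le {R : realType} {d} {D : set 'rV[R]_d} {M : 'M[R]_(d + 1)}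
    {t : 'rV[R]_d} {theta th : R} :
  convex_set D -> t \in D -> 0 < th -> th <= theta ->
  (forall z, exists a l,
     cyl D a /\ lattice (M *m Dtheta d theta) l /\ z = th *: a + l) ->
  exists2 y, Fset D M t y & y <= theta ^+ (d + 1).
Proof.
move=> cD tD th_gt0 th_le cover.
have theta_gt0 : 0 < theta := lt_le_trans th_gt0 th_le.
have theta_neq0 : theta != 0 by rewrite gt_eqF.
have [a [_ [[aD /andP[ay_gt0 ay_le1]] [/lattice_mulmx[w Lw ->] z_eq]]]] :=
  cover (row_mx (th *: t) 0).
have : - w *m Dtheta d theta =
       row_mx (th *: (lsubmx a - t)) (th *: rsubmx a).
  have -> : - w *m Dtheta d theta = th *: a - row_mx (th *: t) 0.
    by rewrite z_eq opprD addNKr mulNmx.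
  rewrite -{1}[a]hsubmxK scale_row_mx opp_row_mx add_row_mx.
  by rewrite oppr0 addr0 scalerBr.
rewrite mul_Dtheta => /eq_row_mx[wl wr].
have vl : lsubmx (- w) = (th / theta) *: (lsubmx a - t).
  by apply: (scalerI theta_neq0); rewrite wl scalerA mulrCA mulfV ?mulr1.
have vr : rsubmx (- w) = (theta ^+ d * th * rsubmx a 0 0)%:M.
  have -> : rsubmx (- w) = theta ^+ d *: (theta ^- d *: rsubmx (- w)).
    by rewrite scalerA mulfV ?scale1r // expf_neq0.
  by rewrite wr {1}(mx11_scalar (rsubmx a)) !scale_scalar_mx mulrA.
exists (theta ^+ d * th * rsubmx a 0 0).
  split; first by rewrite !mulr_gt0 // exprn_gt0.
  exists (- w); split; first exact: latticeN.
  split=> //; rewrite vl; apply: convex_shift_mem => //; first exact: mem_set.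
  - by rewrite divr_ge0 // ltW.
  - by rewrite ler_pdivrMr ?mul1r.
rewrite addn1 exprSr -mulrA ler_pM2l ?exprn_gt0 //.
by rewrite -[theta]mulr1 ler_pM // ltW.
Qed.

Theorem proposition2p3 (R : realType) (d : nat) (D : set 'rV[R]_d)
  (C : set 'M[R]_(d + 1)) (theta : R) :
  bounded_set D -> convex_set D -> interior D !=set0 ->
  Gamma_saturated C -> quotient_compact C ->
  (covrad_sup C (cyl D) < theta%:E)%E ->
  forall (M : 'M[R]_(d + 1)) (t : 'rV[R]_d),
    \det M = 1 -> C (M *m Dtheta d theta) -> t \in D ->
    (F D M t <= (theta ^+ (d + 1))%:E)%E.
Proof.
(* The interior, saturation and compactness hypotheses only serve, in the
   paper, to make covrad_sup finite; the bound itself does not use them. *)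
move=> bD cD _ _ _ C_lt M t detM CM tD.
have Mu : M \in unitmx by rewrite unitmxE detM unitr1.
have : (covrad (M *m Dtheta d theta) (cyl D) < theta%:E)%E.
  apply: le_lt_trans C_lt; apply: ereal_sup_ubound.
  by exists (M *m Dtheta d theta).
case/covrad_lt_cover=> th /andP[th_gt0 th_lt] cover.
have [y Fy y_le] := exists_Fset_le cD tD th_gt0 (ltW th_lt) cover.
by apply: le_trans (F_le_Fset bD Mu Fy) _; rewrite lee_fin.
Qed.
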